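(* Let $n\ge3$, let $i_1,\dots,i_n$ be the canonical generators of $Q_n$, let $j,k<n$ with $j\ne k$, let $x\in\langle i_1,\dots,i_{n-1}\rangle$ and $s\in\{1,-1\}$. If $i_j(i_kx)=s\,(i_k(i_jx))$, then $i_j(i_k(xi_n))=s\,(i_k(i_j(xi_n)))$.
   Context: Cayley--Dickson loops: $Q_0=\{1,-1\}\subset\mathbb{R}$ with conjugation $x^*=x$. For $n\ge1$, $Q_n=\{(x,0),(x,1)\mid x\in Q_{n-1}\}$ with multiplication $(x,0)(y,0)=(xy,0)$, $(x,0)(y,1)=(yx,1)$, $(x,1)(y,0)=(xy^*,1)$, $(x,1)(y,1)=(-y^*x,0)$ and conjugation $(x,0)^*=(x^*,0)$, $(x,1)^*=(-x,1)$, where $-(x,a)=(-x,a)$. $Q_n$ is a loop with neutral element $1=(1,0,\dots,0)$; $-1=(-1,0,\dots,0)$ commutes and associates with all elements. $Q_{n-1}$ is identified with the subloop $\{(x,0)\}\subset Q_n$. Canonical generators: $i_n=(1_{Q_{n-1}},1)\in Q_n$, and $i_1,\dots,i_{n-1}$ are the canonical generators of $Q_{n-1}\subset Q_n$. *)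

From Stdlib Require Import Arith.

(* Carrier of the Cayley--Dickson loop Q_n.
   Q_0 = {1,-1} is encoded by bool: false = 1, true = -1.
   Q_(n+1) = Q_n * bool, the pair (x,a) written (x,0)/(x,1) in the paper. *)
Fixpoint CD (n : nat) : Type :=
  match n with
  | 0 => bool
  | S m => (CD m * bool)%type
  end.

Fixpoint cd_neg (n : nat) : CD n -> CD n :=
  match n as n0 return CD n0 -> CD n0 with
  | 0 => negb
  | S m => fun p => (cd_neg m (fst p), snd p)
  end.

Fixpoint cd_conj (n : nat) : CD n -> CD n :=
  match n as n0 return CD n0 -> CD n0 with
  | 0 => fun x => x
  | S m => fun p => if snd p then (cd_neg m (fst p), true)
                    else (cd_conj m (fst p), false)
  end.

Fixpoint cd_mul (n : nat) : CD n -> CD n -> CD n :=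
  match n as n0 return CD n0 -> CD n0 -> CD n0 with
  | 0 => xorb
  | S m => fun p q =>
      let x := fst p in let a := snd p in
      let y := fst q in let b := snd q in
      match a, b with
      | false, false => (cd_mul m x y, false)
      | false, true  => (cd_mul m y x, true)
      | true,  false => (cd_mul m x (cd_conj m y), true)
      | true,  true  => (cd_neg m (cd_mul m (cd_conj m y) x), false)
      end
  end.

Fixpoint cd_one (n : nat) : CD n :=
  match n as n0 return CD n0 with
  | 0 => false
  | S m => (cd_one m, false)
  end.

(* Meaningful for 1 <= j <= n;
   other indices give junk values and are never used. *)
Fixpoint cd_gen (n : nat) (j : nat) : CD n :=
  match n as n0 return CD n0 with
  | 0 => false
  | S m => if Nat.eqb j (S m) then (cd_one m, true) else (cd_gen m j, false)
  end.

(* The subloop of Q_n generated by a set P: the smallest subset containing P and 1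
   and closed under multiplication (Q_n is finite, so closure under multiplication
   already gives closure under the divisions). *)
Inductive generated (n : nat) (P : CD n -> Prop) : CD n -> Prop :=
  | gen_base : forall x, P x -> generated n P x
  | gen_one : generated n P (cd_one n)
  | gen_mul : forall x y, generated n P x -> generated n P y ->
              generated n P (cd_mul n x y).

From Stdlib Require Import Arith Lia.

(* Write x = (y,0) with y in Q_(n-1), so that x i_n = (y,1), and let u, v be the
   images of i_j, i_k in Q_(n-1).  Both sides of the conclusion then have the
   form (w,1), and comparing first components turns the goal into
   (y v) u = ((y u) v) s.  This is the image of the hypothesis
   u (v y) = s (v (u y)) under conjugation, which reverses products, negates the
   generators u, v (the two signs cancel), fixes s = +-1, and sends y to +-y. *)

Lemma cd_neg_involutive n (x : CD n) : cd_neg n (cd_neg n x) = x.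
Proof.
  induction n as [|n IH]; simpl.
  - now destruct x.
  - destruct x; simpl; now rewrite IH.
Qed.

Lemma cd_conj_neg n (x : CD n) : cd_conj n (cd_neg n x) = cd_neg n (cd_conj n x).
Proof.
  induction n as [|n IH]; simpl; [reflexivity|].
  destruct x as [x []]; simpl; now rewrite ?IH.
Qed.

Lemma cd_conj_involutive n (x : CD n) : cd_conj n (cd_conj n x) = x.
Proof.
  induction n as [|n IH]; simpl; [reflexivity|].
  destruct x as [x []]; simpl; now rewrite ?IH, ?cd_neg_involutive.
Qed.

Lemma cd_conj_one n : cd_conj n (cd_one n) = cd_one n.
Proof. induction n as [|n IH]; simpl; now rewrite ?IH. Qed.

Lemma cd_mul_neg n :
  (forall x y : CD n, cd_mul n (cd_neg n x) y = cd_neg n (cd_mul n x y)) /\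
  (forall x y : CD n, cd_mul n x (cd_neg n y) = cd_neg n (cd_mul n x y)).
Proof.
  induction n as [|n [IHl IHr]]; simpl.
  - split; now intros [] [].
  - split; intros [x []] [y []]; simpl; now rewrite ?cd_conj_neg, ?IHl, ?IHr, ?IHl.
Qed.

Lemma cd_mul_negl n (x y : CD n) : cd_mul n (cd_neg n x) y = cd_neg n (cd_mul n x y).
Proof. apply cd_mul_neg. Qed.

Lemma cd_mul_negr n (x y : CD n) : cd_mul n x (cd_neg n y) = cd_neg n (cd_mul n x y).
Proof. apply cd_mul_neg. Qed.

Lemma cd_mul1r n (x : CD n) : cd_mul n x (cd_one n) = x.
Proof.
  induction n as [|n IH]; simpl; [now destruct x|].
  destruct x as [x []]; simpl; now rewrite ?cd_conj_one, IH.
Qed.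

Lemma cd_mul1l n (x : CD n) : cd_mul n (cd_one n) x = x.
Proof.
  induction n as [|n IH]; simpl; [now destruct x|].
  destruct x as [x []]; simpl; now rewrite ?IH, ?cd_mul1r.
Qed.

Lemma cd_conj_mul n (x y : CD n) :
  cd_conj n (cd_mul n x y) = cd_mul n (cd_conj n y) (cd_conj n x).
Proof.
  induction n as [|n IH]; simpl; [now destruct x, y|].
  destruct x as [x []], y as [y []]; simpl;
    now rewrite ?cd_conj_neg, ?IH, ?cd_conj_involutive, ?cd_mul_negl, ?cd_mul_negr,
      ?cd_neg_involutive.
Qed.

Lemma cd_conj_sign n (x : CD n) : cd_conj n x = x \/ cd_conj n x = cd_neg n x.
Proof.
  induction n as [|n IH]; simpl; [now left|].
  destruct x as [x []]; simpl; [now right|].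
  destruct (IH x) as [-> | ->]; auto.
Qed.

Lemma cd_conj_gen n t : 1 <= t <= n -> cd_conj n (cd_gen n t) = cd_neg n (cd_gen n t).
Proof.
  induction n as [|n IH]; intros Ht; [lia|]; simpl.
  destruct (Nat.eqb_spec t (S n)); simpl; [reflexivity|].
  rewrite IH; [reflexivity|lia].
Qed.

Lemma cd_gen_top m : cd_gen (S m) (S m) = (cd_one m, true).
Proof. simpl. now rewrite Nat.eqb_refl. Qed.

Lemma cd_gen_lift m t : t <> S m -> cd_gen (S m) t = (cd_gen m t, false).
Proof. intros Ht. simpl. now destruct (Nat.eqb_spec t (S m)). Qed.

Lemma generated_in_lower_half m (P : CD (S m) -> Prop) (x : CD (S m)) :
  generated (S m) P x -> (forall y, P y -> snd y = false) -> snd x = false.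
Proof.
  intros Hx HP.
  induction Hx as [y Hy| |[y a] [z b] _ IHy _ IHz]; simpl in *; auto.
  now subst.
Qed.

Lemma cd_conj_relation m (u v s x : CD m) :
  cd_conj m u = cd_neg m u -> cd_conj m v = cd_neg m v -> cd_conj m s = s ->
  cd_mul m u (cd_mul m v x) = cd_mul m s (cd_mul m v (cd_mul m u x)) ->
  cd_mul m (cd_mul m x v) u = cd_mul m (cd_mul m (cd_mul m x u) v) s.
Proof.
  intros Cu Cv Cs H.
  apply (f_equal (cd_conj m)) in H.
  rewrite !cd_conj_mul, Cu, Cv, Cs in H.
  destruct (cd_conj_sign m x) as [Cx|Cx]; rewrite Cx in H;
    repeat (rewrite cd_mul_negl in H || rewrite cd_mul_negr in H
            || rewrite cd_neg_involutive in H); [exact H|].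
  now apply (f_equal (cd_neg m)) in H; rewrite !cd_neg_involutive in H.
Qed.

Theorem mainTheorem9 :
  forall (n : nat), 3 <= n ->
  forall (j k : nat), 1 <= j < n -> 1 <= k < n -> j <> k ->
  forall (x : CD n),
    generated n (fun y => exists t, 1 <= t < n /\ y = cd_gen n t) x ->
  forall (s : CD n), s = cd_one n \/ s = cd_neg n (cd_one n) ->
    cd_mul n (cd_gen n j) (cd_mul n (cd_gen n k) x)
      = cd_mul n s (cd_mul n (cd_gen n k) (cd_mul n (cd_gen n j) x)) ->
    cd_mul n (cd_gen n j) (cd_mul n (cd_gen n k) (cd_mul n x (cd_gen n n)))
      = cd_mul n s (cd_mul n (cd_gen n k)
                      (cd_mul n (cd_gen n j) (cd_mul n x (cd_gen n n)))).
Proof.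
  intros n Hn j k Hj Hk Hjk x Hx s Hs H.
  destruct n as [|m]; [lia|].
  assert (Hx0 : snd x = false).
  { apply (generated_in_lower_half m _ x Hx).
    intros y [t [Ht ->]]. now rewrite cd_gen_lift by lia. }
  destruct x as [y b]; simpl in Hx0; subst b.
  assert (Hr : exists r, s = (r, false) /\ cd_conj m r = r).
  { destruct Hs as [-> | ->]; eexists; split; try reflexivity; simpl;
      now rewrite ?cd_conj_neg, cd_conj_one. }
  destruct Hr as [r [-> Cr]].
  assert (Cj : cd_conj m (cd_gen m j) = cd_neg m (cd_gen m j)) by (apply cd_conj_gen; lia).
  assert (Ck : cd_conj m (cd_gen m k) = cd_neg m (cd_gen m k)) by (apply cd_conj_gen; lia).
  rewrite cd_gen_top, !cd_gen_lift by lia. rewrite !cd_gen_lift in H by lia.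
  simpl in H |- *. injection H as H.
  now rewrite cd_mul1l, (cd_conj_relation m _ _ _ _ Cj Ck Cr H).
Qed.
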